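(* Let $\mathfrak{f}=\sum_{\lambda\vdash4}c_\lambda\mathfrak{p}_\lambda$ with real $c_\lambda$. Then $\mathfrak{f}\in\mathfrak{P}_4$ if and only if for every $\alpha\in[0,1]$ the bivariate form $\Phi^\alpha_{\mathfrak{f}}(x,y)=\sum_{\lambda\vdash4}c_\lambda\Phi_\lambda(\alpha,1-\alpha,x,y)$ is nonnegative on $\mathbb{R}^2$.
   Context: $p^{(n)}_i=\frac1n(x_1^i+\dots+x_n^i)$, $p^{(n)}_\lambda=\prod_i p^{(n)}_{\lambda_i}$; $\mathfrak{p}_\lambda$ is the sequence $(p^{(n)}_\lambda)_{n\ge4}$, and $\mathfrak{f}=\sum c_\lambda\mathfrak{p}_\lambda$ is the sequence $(\sum c_\lambda p^{(n)}_\lambda)_{n\ge4}$. $\mathfrak{P}_4$ is the set of such sequences all of whose terms are nonnegative forms. For $\lambda=(\lambda_1,\dots,\lambda_l)\vdash4$, $\Phi_\lambda(s_1,s_2,t_1,t_2)=\prod_{i=1}^l(s_1t_1^{\lambda_i}+s_2t_2^{\lambda_i})$. *)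

From HB Require Import structures.
From mathcomp Require Import all_boot all_order all_algebra.
From mathcomp Require Import reals.
Set Implicit Arguments. Unset Strict Implicit. Unset Printing Implicit Defensive.
Import Order.TTheory GRing.Theory Num.Theory.
Local Open Scope ring_scope.

Definition partitions4 : seq (seq nat) :=
  [:: [:: 4%N]; [:: 3%N; 1%N]; [:: 2%N; 2%N]; [:: 2%N; 1%N; 1%N];
      [:: 1%N; 1%N; 1%N; 1%N]].

Definition pmean (R : realType) (n i : nat) (x : 'I_n -> R) : R :=
  n%:R^-1 * \sum_(j < n) x j ^+ i.

Definition plam (R : realType) (n : nat) (l : seq nat) (x : 'I_n -> R) : R :=
  \prod_(i <- l) pmean i x.

Definition fterm (R : realType) (c : seq nat -> R) (n : nat) (x : 'I_n -> R) : R :=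
  \sum_(l <- partitions4) c l * plam l x.

Definition inP4 (R : realType) (c : seq nat -> R) : Prop :=
  forall n : nat, (4 <= n)%N -> forall x : 'I_n -> R, 0 <= fterm c x.

Definition Phi (R : realType) (l : seq nat) (s1 s2 t1 t2 : R) : R :=
  \prod_(i <- l) (s1 * t1 ^+ i + s2 * t2 ^+ i).

Definition PhiAlpha (R : realType) (c : seq nat -> R) (a x y : R) : R :=
  \sum_(l <- partitions4) c l * Phi l a (1 - a) x y.

From HB Require Import structures.
From mathcomp Require Import all_boot all_order all_algebra.
From mathcomp Require Import reals.
From mathcomp Require Import ring lra zify.
From mathcomp Require Import polyrcf.
Import Order.TTheory GRing.Theory Num.Theory.
Set Implicit Arguments. Unset Strict Implicit. Unset Printing Implicit Defensive.
Local Open Scope ring_scope.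

(* Both sides evaluate one quartic form [sum_l c_l prod_(i in l) m_i] on moment
   sequences: on [p^(n)_i(x)], the moments of the empirical measure of [x], and on
   [a x^i + (1 - a) y^i], the moments of the two-atom measure [a d_x + (1 - a) d_y].
   A two-atom measure of rational weight [k/N] is an empirical measure, so membership
   in P_4 gives [Phi^a >= 0] for a dense set of [a], hence for all [a] since
   [Phi^a] is polynomial in [a].  Conversely, an empirical measure shares its first
   three moments with the two-atom measure carried by the roots of the quadratic
   [X^2 - eX - g] orthogonal to [1] and [X]; its fourth moment is larger by the mean
   of [(X^2 - eX - g)^2], and the form is nondecreasing in the fourth moment because
   [c_4 >= 0], which is the limit [a -> 0] of [Phi^a(1, 0) / a]. *)

Definition moment_form (T : comPzRingType) (c : seq nat -> T) (m : nat -> T) : T :=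
  \sum_(l <- partitions4) c l * \prod_(i <- l) m i.

Definition two_atom_moment (R : pzRingType) (a x y : R) (i : nat) : R :=
  a * x ^+ i + (1 - a) * y ^+ i.

Lemma moment_formE (T : comPzRingType) (c : seq nat -> T) (m : nat -> T) :
  moment_form c m =
    c [:: 4%N] * m 4%N + c [:: 3%N; 1%N] * m 3%N * m 1%N
    + c [:: 2%N; 2%N] * m 2%N ^+ 2 + c [:: 2%N; 1%N; 1%N] * m 2%N * m 1%N ^+ 2
    + c [:: 1%N; 1%N; 1%N; 1%N] * m 1%N ^+ 4.
Proof. rewrite /moment_form /partitions4 !big_cons !big_nil; ring. Qed.

Lemma fterm_moment_form (R : realType) (c : seq nat -> R) n (x : 'I_n -> R) :
  fterm c x = moment_form c (fun i => pmean i x).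
Proof. by []. Qed.

Lemma PhiAlpha_moment_form (R : realType) (c : seq nat -> R) a x y :
  PhiAlpha c a x y = moment_form c (two_atom_moment a x y).
Proof. by []. Qed.

Lemma eq_moment_form (T : comPzRingType) (c : seq nat -> T) (m m' : nat -> T) :
  m =1 m' -> moment_form c m = moment_form c m'.
Proof. by move=> mm'; rewrite !moment_formE !mm'. Qed.

Lemma ler_moment_form (R : realDomainType) (c : seq nat -> R) (m m' : nat -> R) :
  0 <= c [:: 4%N] -> m' 1%N = m 1%N -> m' 2%N = m 2%N -> m' 3%N = m 3%N ->
  m' 4%N <= m 4%N -> moment_form c m' <= moment_form c m.
Proof.
move=> c4_ge0 e1 e2 e3 le4; rewrite !moment_formE e1 e2 e3 -!addrA lerD2r.
exact: ler_wpM2l.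
Qed.

Lemma poly_ge0_dense (R : rcfType) (p : {poly R}) (a : R) :
  (forall d : R, 0 < d -> exists2 b, `|b - a| < d & 0 <= p.[b]) -> 0 <= p.[a].
Proof.
move=> dense; rewrite leNgt; apply/negP => pa_lt0.
have [d d_gt0 near_a] := @poly_cont R a p (- p.[a]) ltac:(by rewrite oppr_gt0).
have [b /near_a pb_near pb_ge0] := dense d d_gt0.
have := le_lt_trans (ler_norm _) pb_near; lra.
Qed.

Lemma frac_approx (R : archiRealFieldType) (a d : R) (N0 : nat) :
  0 <= a <= 1 -> 0 < d ->
  exists N k, [/\ (N0 < N)%N, (k <= N)%N & `|k%:R / N%:R - a| < d].
Proof.
move=> /andP[a_ge0 a_le1] d_gt0.
pose N := maxn N0.+1 (Num.truncn d^-1).+1.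
have N_gt0 : 0 < N%:R :> R by rewrite ltr0n /N; lia.
have Nd_gt1 : 1 < N%:R * d.
  have dinv_ge0 : 0 <= d^-1 by rewrite invr_ge0 ltW.
  have /andP[_ dinv_lt] := truncn_itv dinv_ge0.
  have : d^-1 < N%:R by apply: lt_le_trans dinv_lt _; rewrite ler_nat /N; lia.
  by rewrite -(ltr_pdivrMr _ _ d_gt0) mul1r.
have /andP[k_le k_gt] := truncn_itv (mulr_ge0 (ltW N_gt0) a_ge0).
exists N, (Num.truncn (N%:R * a)); split; first by rewrite /N; lia.
  by rewrite -(ler_nat R); apply: (le_trans k_le); rewrite ler_piMr // ltW.
rewrite -natr1 in k_gt.
set k := Num.truncn _ in k_le k_gt *.
have kN : k%:R / N%:R * N%:R = k%:R :> R by rewrite divfK // gt_eqF.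
rewrite ltr_norml; apply/andP; split; rewrite -(ltr_pM2r N_gt0); nra.
Qed.

Lemma pmean_two_valued (R : realType) (N k i : nat) (x y : R) :
  (0 < N)%N -> (k <= N)%N ->
  pmean i (fun j : 'I_N => if (j < k)%N then x else y)
  = two_atom_moment (k%:R / N%:R) x y i.
Proof.
move=> N_gt0 kN; rewrite /pmean /two_atom_moment.
have -> : \sum_(j < N) (if (j < k)%N then x else y) ^+ i
          = x ^+ i *+ k + y ^+ i *+ (N - k).
  rewrite -(big_mkord xpredT (fun j => (if (j < k)%N then x else y) ^+ i)).
  rewrite (big_cat_nat (n := k)) //= (eq_big_nat _ _ (F2 := fun _ => x ^+ i)).
    rewrite [X in _ + X](eq_big_nat _ _ (F2 := fun _ => y ^+ i)).
      by rewrite !sumr_const_nat subn0.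
    by move=> j /andP[kj _]; rewrite ltnNge kj.
  by move=> j /andP[_ ->].
rewrite -[x ^+ i *+ k]mulr_natr -[y ^+ i *+ _]mulr_natr natrB //; field.
by rewrite pnatr_eq0 -lt0n.
Qed.

Lemma PhiAlpha_frac_ge0 (R : realType) (c : seq nat -> R) (N k : nat) (x y : R) :
  inP4 c -> (4 <= N)%N -> (k <= N)%N -> 0 <= PhiAlpha c (k%:R / N%:R) x y.
Proof.
move=> c_P4 N_ge4 kN; have N_gt0 : (0 < N)%N by lia.
rewrite PhiAlpha_moment_form.
rewrite -(eq_moment_form _ (fun i => pmean_two_valued i x y N_gt0 kN)).
exact: c_P4.
Qed.

Lemma PhiAlpha_poly (R : realType) (c : seq nat -> R) (x y : R) :
  exists p : {poly R}, forall a, p.[a] = PhiAlpha c a x y.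
Proof.
exists (moment_form (fun l => (c l)%:P)
          (fun i => 'X * (x ^+ i - y ^+ i)%:P + (y ^+ i)%:P)) => a.
rewrite PhiAlpha_moment_form !moment_formE /two_atom_moment.
by rewrite !(hornerD, hornerM, hornerC, hornerX); ring.
Qed.

Lemma PhiAlpha_ge0_of_P4 (R : realType) (c : seq nat -> R) :
  inP4 c -> forall a : R, 0 <= a <= 1 -> forall x y : R, 0 <= PhiAlpha c a x y.
Proof.
move=> c_P4 a a01 x y; have [p pE] := PhiAlpha_poly c x y.
rewrite -pE; apply: poly_ge0_dense => d d_gt0.
have [N [k [N_gt3 kN close]]] := frac_approx 3 a01 d_gt0.
by exists (k%:R / N%:R); rewrite // pE PhiAlpha_frac_ge0.
Qed.

Lemma pmean_quartic (R : realType) (n : nat) (x : 'I_n -> R) (k0 k1 k2 k3 k4 : R) :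
  (0 < n)%N ->
  n%:R^-1 * \sum_(j < n) (k0 + k1 * x j + k2 * x j ^+ 2 + k3 * x j ^+ 3 + k4 * x j ^+ 4)
  = k0 + k1 * pmean 1 x + k2 * pmean 2 x + k3 * pmean 3 x + k4 * pmean 4 x.
Proof.
move=> n_gt0; rewrite /pmean !big_split /= sumr_const card_ord -!mulr_sumr.
under [\sum_(j < n) x j ^+ 1]eq_bigr do rewrite expr1.
rewrite -[k0 *+ n]mulr_natr; field.
by rewrite pnatr_eq0 -lt0n.
Qed.

Lemma mean_sqr_ge0 (R : realType) (n : nat) (f : 'I_n -> R) :
  0 <= n%:R^-1 * \sum_(j < n) f j ^+ 2.
Proof. by rewrite mulr_ge0 ?invr_ge0 ?ler0n // sumr_ge0 // => j _; apply: sqr_ge0. Qed.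

Lemma pmean_sqr_le (R : realType) (n : nat) (x : 'I_n -> R) :
  (0 < n)%N -> pmean 1 x ^+ 2 <= pmean 2 x.
Proof.
move=> n_gt0; have := mean_sqr_ge0 (fun j => x j - pmean 1 x).
rewrite (eq_bigr (fun j => pmean 1 x ^+ 2 + (-2 * pmean 1 x) * x j + 1 * x j ^+ 2
                           + 0 * x j ^+ 3 + 0 * x j ^+ 4)); last by move=> j _; ring.
by rewrite pmean_quartic //; nra.
Qed.

Lemma pmean_const (R : realType) (n i : nat) (x : 'I_n -> R) (r : R) :
  (0 < n)%N -> (forall j, x j = r) -> pmean i x = r ^+ i.
Proof.
move=> n_gt0 xr; rewrite /pmean (eq_bigr (fun _ => r ^+ i)) => [|j _]; last by rewrite xr.
rewrite sumr_const card_ord -[r ^+ i *+ n]mulr_natr mulrC -mulrA mulfV ?mulr1 //.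
by rewrite pnatr_eq0 -lt0n.
Qed.

Lemma pmean_sqr_eq_const (R : realType) (n : nat) (x : 'I_n -> R) :
  (0 < n)%N -> pmean 2 x = pmean 1 x ^+ 2 -> forall j, x j = pmean 1 x.
Proof.
move=> n_gt0 var0 j.
have sum0 : \sum_(j < n) (x j - pmean 1 x) ^+ 2 = 0.
  have := pmean_quartic x (pmean 1 x ^+ 2) (-2 * pmean 1 x) 1 0 0 n_gt0.
  rewrite var0 (eq_bigr (fun j => (x j - pmean 1 x) ^+ 2)) => [|i _]; last by ring.
  have -> : pmean 1 x ^+ 2 + -2 * pmean 1 x * pmean 1 x + 1 * pmean 1 x ^+ 2
            + 0 * pmean 3 x + 0 * pmean 4 x = 0 by ring.
  by move/eqP; rewrite mulf_eq0 invr_eq0 pnatr_eq0 (gtn_eqF n_gt0) => /eqP.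
have /eqP := psumr_eq0P (fun i _ => sqr_ge0 (x i - pmean 1 x)) sum0 (i := j) isT.
by rewrite sqrf_eq0 subr_eq0 => /eqP.
Qed.

Lemma pmean_recurrence (R : realType) (n : nat) (x : 'I_n -> R) : (0 < n)%N ->
  exists e g : R, pmean 2 x = e * pmean 1 x + g
                  /\ pmean 3 x = e * pmean 2 x + g * pmean 1 x.
Proof.
move=> n_gt0; set m1 := pmean 1 x; set m2 := pmean 2 x; set m3 := pmean 3 x.
have [var0|var_neq0] := eqVneq m2 (m1 ^+ 2).
  have xm1 := pmean_sqr_eq_const n_gt0 var0.
  exists m1, 0; rewrite /m2 /m3 (pmean_const 2 n_gt0 xm1) (pmean_const 3 n_gt0 xm1).
  by rewrite -/m1; split; ring.
pose e := (m3 - m1 * m2) / (m2 - m1 ^+ 2).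
exists e, (m2 - e * m1); split; first ring.
by rewrite /e; field; rewrite subr_eq0.
Qed.

(* The mean of [(x_j^2 - e x_j - g)^2] equals [p_4 - (e p_3 + g p_2)] under the recurrence. *)
Lemma pmean4_ge (R : realType) (n : nat) (x : 'I_n -> R) (e g : R) : (0 < n)%N ->
  pmean 2 x = e * pmean 1 x + g -> pmean 3 x = e * pmean 2 x + g * pmean 1 x ->
  e * pmean 3 x + g * pmean 2 x <= pmean 4 x.
Proof.
move=> n_gt0 m2E m3E; have := mean_sqr_ge0 (fun j => x j ^+ 2 - e * x j - g).
rewrite (eq_bigr (fun j => g ^+ 2 + (2 * e * g) * x j + (e ^+ 2 - 2 * g) * x j ^+ 2
                           + (-2 * e) * x j ^+ 3 + 1 * x j ^+ 4)); last by move=> j _; ring.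
rewrite pmean_quartic // => mean_ge0; rewrite -subr_ge0.
suff -> : pmean 4 x - (e * pmean 3 x + g * pmean 2 x)
          = g ^+ 2 + 2 * e * g * pmean 1 x + (e ^+ 2 - 2 * g) * pmean 2 x
            + -2 * e * pmean 3 x + 1 * pmean 4 x by [].
by rewrite m3E m2E; ring.
Qed.

Lemma two_atom_momentSS (R : comPzRingType) (al a b e g : R) (i : nat) :
  a ^+ 2 = e * a + g -> b ^+ 2 = e * b + g ->
  two_atom_moment al a b i.+2
  = e * two_atom_moment al a b i.+1 + g * two_atom_moment al a b i.
Proof. by move=> aE bE; rewrite /two_atom_moment !exprSr -!mulrA -!expr2 aE bE; ring. Qed.

Lemma convex_roots_quadratic (R : rcfType) (e g m : R) : m ^+ 2 <= e * m + g ->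
  exists al a b, [/\ 0 <= al <= 1, a ^+ 2 = e * a + g, b ^+ 2 = e * b + g
                   & al * a + (1 - al) * b = m].
Proof.
move=> m_between.
have disc_ge0 : 0 <= e ^+ 2 + 4 * g by have := sqr_ge0 (e - 2 * m); nra.
pose D := Num.sqrt (e ^+ 2 + 4 * g).
have D2 : D ^+ 2 = e ^+ 2 + 4 * g by rewrite sqr_sqrtr.
have D_ge0 : 0 <= D by apply: sqrtr_ge0.
have rootE r : (2 * r - e) ^+ 2 = D ^+ 2 -> r ^+ 2 = e * r + g by rewrite D2; nra.
have rootDl : ((e - D) / 2) ^+ 2 = e * ((e - D) / 2) + g.
  by apply: rootE; rewrite (_ : _ - e = - D) ?sqrrN //; field.
have rootDr : ((e + D) / 2) ^+ 2 = e * ((e + D) / 2) + g.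
  by apply: rootE; rewrite (_ : _ - e = D) //; field.
have [D_gt0|D_le0] := ltP 0 D.
  exists ((e + D - 2 * m) / (2 * D)), ((e - D) / 2), ((e + D) / 2).
  split=> //; last by field; rewrite gt_eqF.
  by rewrite divr_ge0 ?ler_pdivrMr ?mulr_gt0 //=; nra.
have D0 : D = 0 by apply/eqP; rewrite eq_le D_le0.
have -> : m = (e - D) / 2.
  apply/eqP; rewrite -subr_eq0 -sqrf_eq0 eq_le sqr_ge0 andbT.
  by move: D2; rewrite D0 expr0n /=; nra.
by exists 1, ((e - D) / 2), ((e - D) / 2); rewrite lexx ler01 subrr mul0r addr0 mul1r.
Qed.

(* [PhiAlpha c a 1 0] is [a] times a cubic in [a] with constant term [c_4]. *)
Lemma c4_ge0_of_PhiAlpha (R : realType) (c : seq nat -> R) :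
  (forall a, 0 <= a <= 1 -> 0 <= PhiAlpha c a 1 0) -> 0 <= c [:: 4%N].
Proof.
move=> Phi_ge0.
pose p : {poly R} := (c [:: 4%N])%:P + (c [:: 3%N; 1%N] + c [:: 2%N; 2%N]) *: 'X
  + c [:: 2%N; 1%N; 1%N] *: 'X ^+ 2 + c [:: 1%N; 1%N; 1%N; 1%N] *: 'X ^+ 3.
have pE a : PhiAlpha c a 1 0 = a * p.[a].
  have mu i : two_atom_moment a 1 0 i.+1 = a.
    by rewrite /two_atom_moment expr1n expr0n mulr1 mulr0 addr0.
  rewrite PhiAlpha_moment_form moment_formE !mu.
  by rewrite !(hornerD, hornerZ, hornerC, hornerXn, hornerX); ring.
have -> : c [:: 4%N] = p.[0].
  by rewrite !(hornerD, hornerZ, hornerC, hornerXn, hornerX); ring.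
apply: poly_ge0_dense => d d_gt0; exists (d / (1 + d)).
  by rewrite subr0 ger0_norm ?ltr_pdivrMr ?divr_ge0 //; nra.
have b_gt0 : 0 < d / (1 + d) by rewrite divr_gt0 //; lra.
rewrite -(pmulr_rge0 _ b_gt0) -pE; apply: Phi_ge0.
by rewrite ltW //= ler_pdivrMr; lra.
Qed.

Lemma P4_of_PhiAlpha_ge0 (R : realType) (c : seq nat -> R) :
  (forall a : R, 0 <= a <= 1 -> forall x y : R, 0 <= PhiAlpha c a x y) -> inP4 c.
Proof.
move=> Phi_ge0 n n_ge4 x; have n_gt0 : (0 < n)%N by lia.
have c4_ge0 := c4_ge0_of_PhiAlpha (fun a a01 => Phi_ge0 a a01 1 0).
have [e [g [m2E m3E]]] := pmean_recurrence x n_gt0.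
have [al [a [b [al01 aE bE m1E]]]] :=
  @convex_roots_quadratic _ e g (pmean 1 x) ltac:(by rewrite -m2E pmean_sqr_le).
pose mu := two_atom_moment al a b.
have muSS i : mu i.+2 = e * mu i.+1 + g * mu i by apply: two_atom_momentSS.
have mu0 : mu 0%N = 1 by rewrite /mu /two_atom_moment !expr0; ring.
have mu1 : mu 1%N = pmean 1 x by rewrite /mu /two_atom_moment !expr1.
have mu2 : mu 2%N = pmean 2 x by rewrite muSS mu1 mu0 m2E mulr1.
have mu3 : mu 3%N = pmean 3 x by rewrite muSS mu2 mu1 m3E.
have mu4 : mu 4%N <= pmean 4 x by rewrite muSS mu3 mu2 pmean4_ge.
apply: le_trans (Phi_ge0 al al01 a b) _.
by rewrite PhiAlpha_moment_form fterm_moment_form ler_moment_form.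
Qed.

Theorem proposition7p1 (R : realType) (c : seq nat -> R) :
  inP4 c <->
  (forall a : R, 0 <= a <= 1 -> forall x y : R, 0 <= PhiAlpha c a x y).
Proof. by split; [apply: PhiAlpha_ge0_of_P4 | apply: P4_of_PhiAlpha_ge0]. Qed.
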